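(* Let $P_n$ be a labeled path with ad-pattern $w=w_1\cdots w_{n-1}$. Suppose that at least one of the following holds: (i) $RT(P_n)$ contains a $(3,1,1)$ sub-ribbon, i.e. $w$ contains $aadd$ as a factor (consecutive letters); (ii) $RT(P_n)$ begins with a $(2,1,1)$ sub-ribbon, i.e. $w$ begins with $add$; (iii) $RT(P_n)$ ends with a $(3,1)$ sub-ribbon, i.e. $w$ ends with $aad$. Then $X(P_n;\mathbf{x},q)$ is not symmetric.
   Context: A labeled path $P_n$ is the path graph with vertices $v_1,\dots,v_n$ (edges $v_iv_{i+1}$) where $v_i$ carries label $\sigma_i$ for a permutation $\sigma$ of $[n]$; vertices are identified with labels. A proper coloring is $c\colon[n]\to\{1,2,\dots\}$ with adjacent vertices colored differently; $\operatorname{asc}(c)=\#\{ij\in E: i<j,\ c(i)<c(j)\}$. The CQF is $X(P_n;\mathbf{x},q)=\sum_{c \text{ proper}} x_{c(1)}\cdots x_{c(n)}q^{\operatorname{asc}(c)}$; it is symmetric if each coefficient of $q^k$ is a symmetric function. The ad-pattern of $P_n$ is $w_1\cdots w_{n-1}$ with $w_i=a$ if $\sigma_i<\sigma_{i+1}$ and $w_i=d$ otherwise. The ribbon diagram $RT(P_n)$: start with box $1$, and for $i=1,\dots,n-1$ place box $i+1$ immediately right of box $i$ if $w_i=a$ and immediately above box $i$ if $w_i=d$. A $\beta$ sub-ribbon is a set of consecutive boxes whose shape is the ribbon with row lengths $\beta$ (bottom to top). *)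

From mathcomp Require Import all_boot all_fingroup.
Set Implicit Arguments. Unset Strict Implicit. Unset Printing Implicit Defensive.

(* A labeled path P_n: positions 0..n-1 (v_1..v_n), the vertex at position i
   carries label (sigma i : 'I_n); labels 0..n-1 stand for 1..n (order preserved).
   Vertices are identified with their labels, i.e. with elements of 'I_n. *)

Definition path_labels (n : nat) (sigma : 'S_n) : seq nat :=
  [seq (sigma i : nat) | i <- enum 'I_n].

(* ad-pattern w_1 ... w_{n-1}: true = a (ascent), false = d (descent). *)
Definition adpat (n : nat) (sigma : 'S_n) : seq bool :=
  let l := path_labels sigma in [seq x.1 < x.2 | x <- zip l (behead l)].

Definition consec (n : nat) (i j : 'I_n) : bool := (j : nat) == i.+1.

(* A coloring with colors 'I_m (color j stands for the variable x_{j+1}). *)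
Definition proper (n m : nat) (sigma : 'S_n) (c : {ffun 'I_n -> 'I_m}) : bool :=
  [forall i : 'I_n, forall j : 'I_n, consec i j ==> (c (sigma i) != c (sigma j))].

Definition asc (n m : nat) (sigma : 'S_n) (c : {ffun 'I_n -> 'I_m}) : nat :=
  #|[set p : 'I_n * 'I_n | consec p.1 p.2 &&
      (let u := sigma p.1 in let v := sigma p.2 in
       ((u < v) && (c u < c v)) || ((v < u) && (c v < c u)))]|.

(* Coefficient of q^k x_1^{s_0} x_2^{s_1} ... x_r^{s_{r-1}} in X(P_n; x, q),
   where s : seq nat and r = size s.  Colorings with this content only use the
   colors 1..r, so counting maps 'I_n -> 'I_r is exact. *)
Definition cqf_coeff (n : nat) (sigma : 'S_n) (k : nat) (s : seq nat) : nat :=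
  #|[set c : {ffun 'I_n -> 'I_(size s)} | proper sigma c && (asc sigma c == k) &&
      [forall j : 'I_(size s), #|[set v | c v == j]| == nth 0 s j]]|.

(* Each coefficient of q^k is a symmetric function: invariant under permuting
   the variables (any finitary permutation of the variables moves only finitely
   many indices, so it suffices to permute x_1..x_r for every exponent vector
   of length r, padding with zero exponents allowed). *)
Definition cqf_symmetric (n : nat) (sigma : 'S_n) : Prop :=
  forall (k : nat) (s : seq nat) (pi : 'S_(size s)),
    cqf_coeff sigma k s = cqf_coeff sigma k [seq nth 0 s (pi j) | j <- enum 'I_(size s)].

(* Colourings counted by the coefficient of q^(n-1) are exactly those whose colour
   rises along the path at every a and falls at every d; in such a colouring the
   largest colour sits only on peaks of the path and the smallest only on valleys.
   Walking up and down by one from a base level, and jumping back to the base level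
   just after each turn of a greedy set of pairwise non-consecutive turns, gives such
   a colouring in which the base colour occurs 1 + #resets times.  Each of the three
   patterns yields an isolated turn, whence #turns < 2 #resets; since
   #peaks + #valleys = #turns + 2, the base multiplicity exceeds #peaks or #valleys.
   Exchanging the base colour with the largest (resp. smallest) colour therefore gives
   a content with zero coefficient, while the original content has a positive one. *)

From Pilot Require Import Defs.
From mathcomp Require Import all_boot all_fingroup zify.
Set Implicit Arguments. Unset Strict Implicit. Unset Printing Implicit Defensive.

Section Word.
Variable w : seq bool.

Definition turn k := (0 < k < size w) && (nth false w k.-1 != nth false w k).

Definition peak k :=
  ((k == 0) || nth false w k.-1) && ((k == size w) || ~~ nth false w k).
Definition valley k :=
  ((k == 0) || ~~ nth false w k.-1) && ((k == size w) || nth false w k).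

Definition follows (f : nat -> nat) :=
  forall k, k < size w -> if nth false w k then f k < f k.+1 else f k.+1 < f k.

Lemma follows_max_peak f j : follows f -> j <= size w ->
  (forall k, k <= size w -> f k <= f j) -> peak j.
Proof.
move=> Hf Hj Hmax; apply/andP; split.
- case: j Hj Hmax => // j Hj Hmax; case Hd: (nth false w j) => //.
  by have := Hf j Hj; rewrite Hd ltnNge Hmax // ltnW.
- case: ltngtP Hj => // Hj _; case Hd: (nth false w j) => //.
  by have := Hf j Hj; rewrite Hd ltnNge Hmax.
Qed.

Lemma follows_min_valley f j : follows f -> j <= size w ->
  (forall k, k <= size w -> f j <= f k) -> valley j.
Proof.
move=> Hf Hj Hmin; apply/andP; split.
- case: j Hj Hmin => // j Hj Hmin; case Hu: (nth false w j) => //.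
  by have := Hf j Hj; rewrite Hu ltnNge Hmin // ltnW.
- case: ltngtP Hj => // Hj _; case Hu: (nth false w j) => //.
  by have := Hf j Hj; rewrite Hu ltnNge Hmin.
Qed.

Lemma peak_add_valley :
  \sum_(k < (size w).+1) (peak k + valley k) = 2 + \sum_(k < (size w).+1) turn k.
Proof.
have split_ends k : k <= size w ->
    peak k + valley k = turn k + ((k == 0) + (k == size w)).
  move=> Hk; rewrite /peak /valley /turn.
  case: (posnP k) => [->|Hk0]; first by case: (size w); case: (nth false w 0).
  case: (ltngtP k (size w)) Hk => // [Hlt|->] _.
    by case: (nth false w k.-1); case: (nth false w k).
  by case: (nth false w _).
rewrite (eq_bigr _ (fun (k : 'I_(size w).+1) _ => split_ends k (ltn_ord k))) big_split /= addnC.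
congr (_ + _); rewrite big_split /= big_ord_recl big_ord_recr /= !big1 //.
- by rewrite eqxx.
- by move=> i _; rewrite ltn_eqF.
Qed.

Lemma eq_follows f g : (forall k, k <= size w -> f k = g k) -> follows f -> follows g.
Proof. by move=> Efg Hf k Hk; rewrite -Efg ?(ltnW Hk) // -Efg //; apply: Hf. Qed.

(* [reset] is a greedy maximal set of pairwise non-consecutive turns; [height]
   returns to the base level [size w] right after each of them. *)
Fixpoint reset k := if k is k'.+1 then turn k && ~~ reset k' else false.

Fixpoint height k :=
  if k is k'.+1 then
    if reset k' then size w else if nth false w k' then (height k').+1 else (height k').-1
  else size w.

Lemma resetE k : reset k = turn k && ~~ reset k.-1.
Proof. by case: k. Qed.

Lemma reset_turn k : reset k -> turn k.
Proof. by rewrite resetE => /andP[]. Qed.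

Lemma turn_ge k : size w <= k -> turn k = false.
Proof. by move=> Hk; rewrite /turn [k < size w]ltnNge Hk andbF. Qed.

Lemma isolated_turn_reset j : turn j -> ~~ turn j.-1 -> reset j.
Proof.
by move=> Hturn Hprev; rewrite resetE Hturn; apply: contra Hprev; apply: reset_turn.
Qed.

Lemma height_inv k : k <= size w ->
  size w - k <= height k <= size w + k /\
  (0 < k -> if reset k.-1 then height k = size w
            else if nth false w k.-1 then size w < height k else height k < size w).
Proof.
elim: k => [|k IH] Hk /=; first by rewrite subn0 addn0 leqnn.
have [/andP[Hlo Hhi] Hside] := IH (ltnW Hk).
case Hr: (reset k); first by split => //; lia.
have Hside' : if nth false w k then size w <= height k else height k <= size w.
  case: (posnP k) => [->|Hk0] /=; first by case: ifP.
  move: (Hside Hk0); case Hr1: (reset k.-1) => /= Hh; first by rewrite Hh; case: ifP.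
  have Ew : nth false w k.-1 = nth false w k.
    apply/eqP; move: Hr; rewrite resetE Hr1 andbT /turn Hk0 Hk /=.
    by move/negbT; rewrite negbK.
  by move: Hh; rewrite Ew; case: ifP => _; apply: ltnW.
by case: ifP Hside' => _ ?; split => //; lia.
Qed.

Lemma height_follows : follows height.
Proof.
move=> k Hk; have [/andP[Hlo _] _] := height_inv (ltnW Hk).
rewrite /=; case Hr: (reset k); last by case: (nth false w k); lia.
have [_ Hside] := height_inv (ltnW Hk).
have Hk0 : 0 < k by move/reset_turn: Hr => /andP[/andP[]].
move: Hr; rewrite resetE => /andP[Ht Hr1]; move: (Hside Hk0); rewrite (negbTE Hr1).
by move: Ht => /andP[_]; case: (nth false w k.-1); case: (nth false w k).
Qed.

Lemma sum_height_base :
  \sum_(k < (size w).+1) (height k == size w) = 1 + \sum_(k < (size w).+1) reset k.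
Proof.
rewrite big_ord_recl big_ord_recr /= eqxx [reset _]resetE turn_ge // addn0.
congr (_ + _); apply: eq_bigr => k _.
have [_ /(_ isT)] := height_inv (ltn_ord k); rewrite /= add0n.
by case: (reset k); rewrite ?eqxx //; case: (nth false w k) => ?; apply/eqP; lia.
Qed.

Lemma sum_turn_lt_double_reset j : reset j -> ~~ turn j.+1 ->
  \sum_(k < (size w).+1) turn k < 2 * \sum_(k < (size w).+1) reset k.
Proof.
move=> Hreset Hnext.
have Hjw : j < (size w).+1 by move/reset_turn: Hreset => /andP[/andP[_ /ltnW]].
have Eturn : \sum_(k < (size w).+1) turn k =
    \sum_(k < (size w).+1) reset k + \sum_(k < (size w).+1) (turn k.+1 && reset k).
  transitivity (\sum_(k < (size w).+1) (reset k + (turn k && reset k.-1))).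
    by apply: eq_bigr => k _; rewrite resetE; case: (turn k); case: (reset k.-1).
  rewrite big_split /=; congr (_ + _).
  by rewrite big_ord_recl [RHS]big_ord_recr /= turn_ge // add0n addn0.
have Ereset : \sum_(k < (size w).+1) reset k =
    \sum_(k < (size w).+1) (turn k.+1 && reset k) +
    \sum_(k < (size w).+1) (reset k && ~~ turn k.+1).
  by rewrite -big_split; apply: eq_bigr => k _; case: (turn k.+1); case: (reset k).
have : 0 < \sum_(k < (size w).+1) (reset k && ~~ turn k.+1).
  by rewrite (bigD1 (Ordinal Hjw)) //= Hreset Hnext.
lia.
Qed.
End Word.

Lemma turn_cat s1 x s2 k : 0 < k < size x ->
  turn (s1 ++ x ++ s2) (size s1 + k) = (nth false x k.-1 != nth false x k).
Proof.
case/andP=> Hk0 Hkx; rewrite /turn !size_cat.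
have -> : 0 < size s1 + k < size s1 + (size x + size s2) by apply/andP; lia.
have -> : (size s1 + k).-1 = size s1 + k.-1 by lia.
rewrite !nth_cat !ltnNge !leq_addr /= !addKn -!ltnNge.
by rewrite Hkx (leq_ltn_trans (leq_pred k) Hkx).
Qed.

Lemma pattern_isolated_turn w :
  [|| infix [:: true; true; false; false] w, prefix [:: true; false; false] w
    | suffix [:: true; true; false] w] ->
  exists j, [/\ turn w j, ~~ turn w j.-1 & ~~ turn w j.+1].
Proof.
case/or3P.
- case/infixP=> [s1 [s2 ->]]; exists (size s1).+2.
  have T := @turn_cat s1 [:: true; true; false; false] s2.
  by move: (T 1) (T 2) (T 3); rewrite addn1 addn2 addn3 => -> // -> // ->.
- case/prefixP=> [s ->]; exists 1.
  have T := @turn_cat [::] [:: true; false; false] s.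
  by move: (T 1) (T 2); rewrite !add0n => -> // -> //.
- case/suffixP=> [s ->]; exists (size s).+2.
  have T := @turn_cat s [:: true; true; false] [::].
  move: (T 1) (T 2); rewrite cats0 addn1 addn2 => -> // -> //.
  by rewrite turn_ge // size_cat addn3.
Qed.

Lemma size_adpat n (sigma : 'S_n) : size (adpat sigma) = n.-1.
Proof.
rewrite /adpat size_map size_zip size_behead /path_labels size_map size_enum_ord.
by rewrite minnE subKn // leq_pred.
Qed.

Lemma nth_permuted (s : seq nat) (pi : 'S_(size s)) (i : 'I_(size s)) :
  nth 0 [seq nth 0 s (pi j) | j <- enum 'I_(size s)] i = nth 0 s (pi i).
Proof. by rewrite (nth_map i) ?size_enum_ord // nth_ord_enum. Qed.

Section LabeledPath.
Variables (N : nat) (sigma : 'S_N.+1).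

Lemma nth_adpat k : k < N ->
  nth false (adpat sigma) k = (sigma (inord k) < sigma (inord k.+1)).
Proof.
move=> Hk; have Hzip : k < size (zip (path_labels sigma) (behead (path_labels sigma))).
  by rewrite size_zip size_behead /path_labels size_map size_enum_ord minnE subKn.
have nth_labels i : i < N.+1 -> nth 0 (path_labels sigma) i = sigma (inord i).
  by move=> Hi; rewrite (nth_map ord0) ?size_enum_ord // -{1}(inordK Hi) nth_ord_enum.
rewrite /adpat (nth_map (0, 0)) // nth_zip_cond Hzip /= nth_behead.
by rewrite !nth_labels // ltnW.
Qed.

Definition rises m (c : {ffun 'I_N.+1 -> 'I_m}) (p : 'I_N.+1 * 'I_N.+1) :=
  let u := sigma p.1 in let v := sigma p.2 in
  ((u < v) && (c u < c v)) || ((v < u) && (c v < c u)).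

(* The colours read along the path; only meaningful on positions 0..N, since
   [inord] sends larger indices to 0. *)
Definition along m (c : {ffun 'I_N.+1 -> 'I_m}) k : nat := c (sigma (inord k)).

Lemma consec_inord (i j : 'I_N.+1) : consec i j -> i < N /\ (i, j) = (inord i, inord i.+1).
Proof.
move=> /eqP Hj; have Hi : i < N by rewrite -ltnS -Hj.
by split => //; congr pair; apply: val_inj; rewrite /= ?Hj inordK // ltnW.
Qed.

Lemma card_consec : #|[set p : 'I_N.+1 * 'I_N.+1 | consec p.1 p.2]| = N.
Proof.
pose f (i : 'I_N) : 'I_N.+1 * 'I_N.+1 := (inord i, inord i.+1).
have f_inj : injective f.
  by move=> k l [/(congr1 val)]; rewrite /= !inordK ?ltnS 1?ltnW // => /val_inj.
rewrite -[N in RHS]card_ord -cardsT -(card_imset [set: 'I_N] f_inj).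
apply: eq_card => -[i j]; rewrite inE; apply/idP/imsetP => [/consec_inord[Hi ->]|[k _ [-> ->]]].
  by exists (Ordinal Hi).
by have Hk := ltn_ord k; rewrite /consec /= !inordK // ltnW.
Qed.

Lemma rises_inord m (c : {ffun 'I_N.+1 -> 'I_m}) k : k < N ->
  rises c (inord k, inord k.+1) =
  if nth false (adpat sigma) k then along c k < along c k.+1 else along c k.+1 < along c k.
Proof.
move=> Hk; rewrite nth_adpat // /rises /along /=.
have : sigma (inord k) != sigma (inord k.+1).
  rewrite (inj_eq perm_inj); apply/eqP => /(congr1 val) /=.
  by rewrite !inordK // ?ltnS 1?ltnW // => /n_Sn.
by rewrite -val_eqE neq_ltn => /orP[] Hlt; rewrite Hlt (leq_gtF (ltnW Hlt)) ?orbF.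
Qed.

Lemma asc_top_follows m (c : {ffun 'I_N.+1 -> 'I_m}) :
  asc sigma c = N <-> follows (adpat sigma) (along c).
Proof.
have sub : [set p | consec p.1 p.2 && rises c p] \subset [set p | consec p.1 p.2].
  by apply/subsetP => p; rewrite !inE => /andP[].
split => [Hasc k|Hf].
- have /eqP Eset : [set p | consec p.1 p.2 && rises c p] == [set p | consec p.1 p.2].
    rewrite eqEcard sub card_consec.
    have -> : #|[set p | consec p.1 p.2 && rises c p]| = asc sigma c by [].
    by rewrite Hasc leqnn.
  rewrite size_adpat => Hk; rewrite -rises_inord //.
  have : (inord k, inord k.+1) \in [set p : 'I_N.+1 * 'I_N.+1 | consec p.1 p.2].
    by rewrite inE /consec /= !inordK // ltnW.
  by rewrite -Eset inE => /andP[].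
- rewrite /asc -[RHS]card_consec; apply: eq_card => -[i j]; rewrite !inE /=.
  case Hij: (consec i j) => //=; have [Hi Eij] := consec_inord Hij.
  change (rises c (i, j)); by rewrite Eij rises_inord // Hf // size_adpat.
Qed.

Lemma follows_proper m (c : {ffun 'I_N.+1 -> 'I_m}) :
  follows (adpat sigma) (along c) -> Defs.proper sigma c.
Proof.
move=> Hf; apply/forallP => i; apply/forallP => j; apply/implyP => Hij.
have [Hi [_ ->]] := consec_inord Hij.
have := Hf i; rewrite size_adpat /along inord_val => /(_ Hi).
by case: ifP => _; rewrite neq_ltn => ->; rewrite ?orbT.
Qed.

Lemma card_colour_class m (c : {ffun 'I_N.+1 -> 'I_m}) t :
  #|[set v | c v == t]| = \sum_(i < N.+1) (c (sigma i) == t).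
Proof.
rewrite -sum1dep_card (reindex_inj (@perm_inj _ sigma)) /= big_mkcond /=.
by apply: eq_bigr => i _; case: (_ == _).
Qed.

Lemma top_colour_class_le m (c : {ffun 'I_N.+1 -> 'I_m}) (t : 'I_m) :
  asc sigma c = N -> (forall x : 'I_m, x <= t) ->
  #|[set v | c v == t]| <= \sum_(k < N.+1) peak (adpat sigma) k.
Proof.
move=> /asc_top_follows Hf Hmax; rewrite card_colour_class; apply: leq_sum => i _.
case: eqP => // Hi; rewrite lt0b.
apply: (follows_max_peak Hf) => [|k _]; first by rewrite size_adpat -ltnS.
by rewrite /along inord_val Hi Hmax.
Qed.

Lemma bottom_colour_class_le m (c : {ffun 'I_N.+1 -> 'I_m}) (t : 'I_m) :
  asc sigma c = N -> (forall x : 'I_m, t <= x) ->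
  #|[set v | c v == t]| <= \sum_(k < N.+1) valley (adpat sigma) k.
Proof.
move=> /asc_top_follows Hf Hmin; rewrite card_colour_class; apply: leq_sum => i _.
case: eqP => // Hi; rewrite lt0b.
apply: (follows_min_valley Hf) => [|k _]; first by rewrite size_adpat -ltnS.
by rewrite /along inord_val Hi Hmin.
Qed.

Lemma top_coeff_eq0 s j B :
  (forall c : {ffun 'I_N.+1 -> 'I_(size s)}, asc sigma c = N ->
     forall t : 'I_(size s), t = j :> nat -> #|[set v | c v == t]| <= B) ->
  B < nth 0 s j -> cqf_coeff sigma N s = 0.
Proof.
move=> Hclass HB; have Hj : j < size s.
  by rewrite ltnNge; apply: contraTN HB => /(nth_default 0) ->.
apply/eqP; rewrite cards_eq0; apply/eqP/setP => c; rewrite !inE.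
apply/negbTE/negP => /andP[/andP[_ /eqP Hasc] /forallP /(_ (Ordinal Hj)) /eqP Hcard].
by have := Hclass c Hasc (Ordinal Hj) erefl; rewrite Hcard /= leqNgt HB.
Qed.

Lemma permuted_coeff_top_eq0 s (pi : 'S_(size s)) (t : 'I_(size s)) :
  t.+1 = size s -> \sum_(k < N.+1) peak (adpat sigma) k < nth 0 s (pi t) ->
  cqf_coeff sigma N [seq nth 0 s (pi i) | i <- enum 'I_(size s)] = 0.
Proof.
move=> Ht; rewrite -nth_permuted; apply: top_coeff_eq0 => c Hasc u Hu.
apply: top_colour_class_le => // x; rewrite Hu -ltnS Ht.
by move: (nat_of_ord x) (ltn_ord x) => k; rewrite size_map size_enum_ord.
Qed.

Lemma permuted_coeff_bottom_eq0 s (pi : 'S_(size s)) (t : 'I_(size s)) :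
  t = 0 :> nat -> \sum_(k < N.+1) valley (adpat sigma) k < nth 0 s (pi t) ->
  cqf_coeff sigma N [seq nth 0 s (pi i) | i <- enum 'I_(size s)] = 0.
Proof.
move=> Ht; rewrite -nth_permuted; apply: top_coeff_eq0 => c Hasc u Hu.
by apply: bottom_colour_class_le => // x; rewrite Hu Ht.
Qed.

Definition height_content :=
  [seq \sum_(k < N.+1) (height (adpat sigma) k == j) | j <- iota 0 N.*2.+1].

Lemma size_height_content : size height_content = N.*2.+1.
Proof. by rewrite size_map size_iota. Qed.

Lemma height_lt_size (i : 'I_N.+1) : height (adpat sigma) i < size height_content.
Proof.
have Hi : i <= size (adpat sigma) by rewrite size_adpat -ltnS.
have [/andP[_ Hhi] _] := height_inv Hi.
by rewrite size_height_content ltnS; move: Hi Hhi; rewrite size_adpat; lia.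
Qed.

Definition height_colouring : {ffun 'I_N.+1 -> 'I_(size height_content)} :=
  [ffun v => Ordinal (height_lt_size ((sigma^-1)%g v))].

Lemma along_height_colouring k : k <= N -> along height_colouring k = height (adpat sigma) k.
Proof. by move=> Hk; rewrite /along ffunE /= permK inordK. Qed.

Lemma cqf_coeff_height_gt0 : 0 < cqf_coeff sigma N height_content.
Proof.
have Hf : follows (adpat sigma) (along height_colouring).
  apply: (eq_follows _ (@height_follows (adpat sigma))) => k.
  by rewrite size_adpat => Hk; rewrite along_height_colouring.
apply/card_gt0P; exists height_colouring.
rewrite !inE follows_proper //= (proj2 (asc_top_follows _) Hf) eqxx /=.
apply/forallP => j; rewrite card_colour_class (nth_map 0) ?size_iota -?size_height_content //.
by rewrite nth_iota -?size_height_content //; apply/eqP/eq_bigr => i _; rewrite ffunE permK.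
Qed.

Lemma peaks_or_valleys_lt_base j : let w := adpat sigma in
  turn w j -> ~~ turn w j.-1 -> ~~ turn w j.+1 ->
  \sum_(k < N.+1) peak w k < nth 0 height_content N \/
  \sum_(k < N.+1) valley w k < nth 0 height_content N.
Proof.
move=> w Hj Hprev Hnext.
have Hbase : nth 0 height_content N = 1 + \sum_(k < N.+1) reset w k.
  rewrite (nth_map 0) ?size_iota ?nth_iota; try lia.
  by have := sum_height_base w; rewrite size_adpat add0n.
have := sum_turn_lt_double_reset (isolated_turn_reset Hj Hprev) Hnext.
have := peak_add_valley w; rewrite !size_adpat big_split /= Hbase.
move: (\sum_(k < N.+1) turn w k) (\sum_(k < N.+1) reset w k) => T R.
move: (\sum_(k < N.+1) peak w k) (\sum_(k < N.+1) valley w k) => P V; lia.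
Qed.
End LabeledPath.

Theorem corollary4p6 (n : nat) (sigma : 'S_n) :
  [|| infix [:: true; true; false; false] (adpat sigma),
      prefix [:: true; false; false] (adpat sigma)
    | suffix [:: true; true; false] (adpat sigma)] ->
  ~ cqf_symmetric sigma.
Proof.
move=> /pattern_isolated_turn [j [Hturn Hprev Hnext]] Hsym.
case: n sigma Hsym Hturn Hprev Hnext => [|N] sigma Hsym Hturn Hprev Hnext.
  by move: Hturn => /andP[/andP[_]]; rewrite size_adpat.
have := peaks_or_valleys_lt_base Hturn Hprev Hnext.
set s := height_content sigma; have Hsize : size s = N.*2.+1 := size_height_content sigma.
have Hbase : N < size s by rewrite Hsize; lia.
have swap_nonzero t : cqf_coeff sigma N
    [seq nth 0 s (tperm (Ordinal Hbase) t i) | i <- enum 'I_(size s)] <> 0.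
  by rewrite -Hsym; apply/eqP; rewrite -lt0n cqf_coeff_height_gt0.
case=> [Hpeak|Hvalley].
- have Htop : (size s).-1 < size s by rewrite Hsize.
  apply: (swap_nonzero (Ordinal Htop)).
  apply: (permuted_coeff_top_eq0 (t := Ordinal Htop)); first by apply: prednK; rewrite Hsize.
  by rewrite tpermR.
- have Hbot : 0 < size s by rewrite Hsize.
  apply: (swap_nonzero (Ordinal Hbot)).
  apply: (permuted_coeff_bottom_eq0 (t := Ordinal Hbot)) => //.
  by rewrite tpermR.
Qed.
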